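(* Fix integers $1\le m\le n$ and $f\in[0,1/2]$. Then $q\mapsto q^2/v(q)$ is an increasing function of the integer $q$ on $1\le q\le 2^n$.
   Context: For $n,m$, $f$ and integer $1\le q\le 2^n+1$ define $w^*(n,q)=\max\{w\ge0:\sum_{j=1}^w\binom{n}{j}\le q-1\}$, $r(n,q)=q-1-\sum_{w=1}^{w^*(n,q)}\binom{n}{w}$, and $$(q-1)\,\epsilon(n,m,q,f)=\sum_{w=1}^{w^*(n,q)}\binom{n}{w}\frac{1}{2^m}(1+(1-2f)^w)^m+\frac{r(n,q)}{2^m}(1+(1-2f)^{w^*(n,q)+1})^m$$ (so $\epsilon(n,m,q,f)$ is this bracket divided by $q-1$ when $q\ge2$). Define $$v(q)=\frac{q}{2^m}\left(1+\epsilon(n,m,q,f)\cdot(q-1)-\frac{q}{2^m}\right).$$ *)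

From mathcomp Require Import all_boot all_order all_algebra.
Set Implicit Arguments. Unset Strict Implicit. Unset Printing Implicit Defensive.
Import Order.TTheory GRing.Theory Num.Theory.
Local Open Scope ring_scope.

(* w^*(n,q) = max { w >= 0 : sum_{j=1}^w C(n,j) <= q-1 }, with w ranging
   over 0..n (for w > n the sum no longer grows, so the paper's max is only
   meaningful with w <= n; for q = 2^n, 2^n+1 this gives w^* = n, r = 0). *)
Definition wstar (n q : nat) : nat :=
  (\max_(w < n.+1 | (\sum_(1 <= j < w.+1) 'C(n, j) <= q.-1)%N) (w : nat))%N.

Definition rres (n q : nat) : nat :=
  (q.-1 - \sum_(1 <= w < (wstar n q).+1) 'C(n, w))%N.

Definition eps_bracket {R : realFieldType} (n m q : nat) (f : R) : R :=
  \sum_(1 <= w < (wstar n q).+1)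
      'C(n, w)%:R * (1 / 2 ^+ m) * (1 + (1 - 2 * f) ^+ w) ^+ m
  + (rres n q)%:R / 2 ^+ m * (1 + (1 - 2 * f) ^+ (wstar n q).+1) ^+ m.

Definition eps {R : realFieldType} (n m q : nat) (f : R) : R :=
  eps_bracket n m q f / (q.-1)%:R.

Definition v {R : realFieldType} (n m : nat) (f : R) (q : nat) : R :=
  q%:R / 2 ^+ m * (1 + eps n m q f * (q.-1)%:R - q%:R / 2 ^+ m).

(* Write e = 2^-m and B(q) = (q-1) eps(q), so that v(q) = q e (1 + B(q) - q e).
   The bracket (q-1) eps(q) sums, over q-1 nonzero vectors of {0,1}^n taken
   by increasing Hamming weight w, the terms c(w) = ((1 + (1-2f)^w) / 2)^m,
   which lie in [e, 1] and decrease with w.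
   Passing from q to q+1 adds one term c = c(w^*(q)+1), which is at most every
   term already present; hence B(q+1) = B(q) + c with B(q) >= (q-1) c, and then
   q (1 + B(q+1) - (q+1) e) <= (q+1) (1 + B(q) - q e), which is exactly
   q^2 / v(q) <= (q+1)^2 / v(q+1). *)
From mathcomp Require Import all_boot all_order all_algebra.
From mathcomp Require Import lra zify.
Import Order.TTheory GRing.Theory Num.Theory.
Local Open Scope ring_scope.

Definition binsum (n w : nat) : nat := (\sum_(1 <= j < w.+1) 'C(n, j))%N.

Lemma binsum0 n : binsum n 0 = 0%N.
Proof. by rewrite /binsum big_geq. Qed.

Lemma binsumS n w : binsum n w.+1 = (binsum n w + 'C(n, w.+1))%N.
Proof. by rewrite /binsum big_nat_recr. Qed.

Lemma leq_binsum n : {homo binsum n : w1 w2 / (w1 <= w2)%N}.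
Proof.
apply: homo_leq => [//|w1 w2 w3|w]; first exact: leq_trans.
by rewrite binsumS leq_addr.
Qed.

Lemma binsum_full n : (binsum n n).+1 = (2 ^ n)%N.
Proof.
rewrite -[2%N]/(1 + 1)%N expnDn big_ord_recl bin0 !exp1n /binsum big_add1 big_mkord.
by congr (_.+1); apply: eq_bigr => i _; rewrite !exp1n !muln1.
Qed.

Section WStar.
Variables n q : nat.

Lemma wstar_le : (wstar n q <= n)%N.
Proof. by apply/bigmax_leqP => i _; rewrite -ltnS. Qed.

Lemma binsum_wstar : (binsum n (wstar n q) <= q.-1)%N.
Proof.
have nonempty : (0 < #|[pred i : 'I_n.+1 | binsum n i <= q.-1]|)%N.
  by apply/card_gt0P; exists ord0; rewrite inE /= binsum0.
have [i0 + wstar_i0] := eq_bigmax_cond (fun i : 'I_n.+1 => nat_of_ord i) nonempty.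
by rewrite inE (_ : wstar n q = i0).
Qed.

Lemma leq_wstar w : (w <= n)%N -> (binsum n w <= q.-1)%N -> (w <= wstar n q)%N.
Proof.
by rewrite -ltnS => lt_wn le_wq; apply: (leq_bigmax_cond (Ordinal lt_wn)).
Qed.

End WStar.

Lemma wstar_succ n t w : (w <= n)%N -> (binsum n w <= t)%N ->
  (w = n \/ t < binsum n w.+1)%N -> wstar n t.+1 = w.
Proof.
move=> le_wn le_wt w_max; apply/eqP; rewrite eqn_leq leq_wstar // andbT.
rewrite leqNgt; apply/negP => lt_w_wstar.
case: w_max => [w_n|lt_t_next].
  by rewrite w_n ltnNge wstar_le in lt_w_wstar.
have := leq_trans (@leq_binsum n _ _ lt_w_wstar) (binsum_wstar n t.+1).
by rewrite leqNgt lt_t_next.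
Qed.

Definition weight {R : unitRingType} (m : nat) (x : R) (j : nat) : R :=
  (1 + x ^+ j) ^+ m / 2 ^+ m.

Section Weight.
Context {R : realFieldType}.
Variables (m : nat) (x : R).
Hypotheses (x_ge0 : 0 <= x) (x_le1 : x <= 1).

Lemma inv_exp2_gt0 : 0 < (2 ^+ m : R)^-1.
Proof. by rewrite invr_gt0 exprn_gt0. Qed.

Lemma weight_le1 j : weight m x j <= 1.
Proof.
rewrite /weight ler_pdivrMr ?exprn_gt0 // mul1r.
have := exprn_ge0 j x_ge0; have := exprn_ile1 j x_ge0 x_le1.
by move=> ? ?; apply: lerXn2r; rewrite ?nnegrE; lra.
Qed.

Lemma inv_exp2_le_weight j : (2 ^+ m)^-1 <= weight m x j.
Proof.
rewrite /weight -[X in X <= _]mul1r ler_pM2r ?inv_exp2_gt0 //.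
by apply: exprn_ege1; have := exprn_ge0 j x_ge0; lra.
Qed.

Lemma weight_nonincreasing : {homo weight m x : j k / (j <= k)%N >-> k <= j}.
Proof.
move=> j k le_jk; rewrite /weight ler_pM2r ?inv_exp2_gt0 //.
have := exprn_ge0 j x_ge0; have := exprn_ge0 k x_ge0.
have := ler_wiXn2l x_ge0 x_le1 le_jk.
by move=> ? ? ?; apply: lerXn2r; rewrite ?nnegrE; lra.
Qed.

End Weight.

Section Bracket.
Context {R : realFieldType}.
Variables (n m : nat) (x : R).

(* The bracket for q - 1 = t nonzero vectors taken by increasing weight: all
   'C(n, j) vectors of each weight j <= w, then t - binsum n w of weight w+1. *)
Definition bracket (w t : nat) : R :=
  \sum_(1 <= j < w.+1) 'C(n, j)%:R * weight m x j
  + (t - binsum n w)%:R * weight m x w.+1.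

Lemma bracket_ge (w t : nat) : 0 <= x -> x <= 1 -> (binsum n w <= t)%N ->
  t%:R * weight m x w.+1 <= bracket w t.
Proof.
move=> x_ge0 x_le1 le_wt; rewrite /bracket -[in leLHS](subnK le_wt).
rewrite natrD mulrDl [leRHS]addrC lerD2l /binsum natr_sum mulr_suml.
apply: ler_sum_nat => j /andP[_ lt_jw]; rewrite ler_wpM2l ?ler0n //.
exact: (@weight_nonincreasing _ _ _ x_ge0 x_le1 _ _ (ltnW lt_jw)).
Qed.

Lemma bracket_succ w t : (binsum n w <= t)%N ->
  bracket w t.+1 = bracket w t + weight m x w.+1.
Proof. by move=> le_wt; rewrite /bracket subSn // -natr1 mulrDl mul1r addrA. Qed.

Lemma bracket_succ_level w :
  bracket w (binsum n w.+1) = bracket w.+1 (binsum n w.+1).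
Proof.
by rewrite /bracket subnn mul0r addr0 [in RHS]big_nat_recr //= binsumS addKn.
Qed.

End Bracket.

Section EpsBracket.
Variables (R : realFieldType) (n m : nat) (f : R).

Lemma eps_bracketE q : eps_bracket n m q f = bracket n m (1 - 2 * f) (wstar n q) q.-1.
Proof.
rewrite /eps_bracket /bracket /rres /weight; congr (_ + _); last by rewrite mulrAC -mulrA.
by apply: eq_bigr => j _; rewrite mul1r -mulrA [_^-1 * _]mulrC.
Qed.

Lemma eps_bracket_succ q : (1 <= q)%N -> (q < 2 ^ n)%N ->
  eps_bracket n m q.+1 f = eps_bracket n m q f + weight m (1 - 2 * f) (wstar n q).+1.
Proof.
move=> q_ge1 lt_q_full; rewrite !eps_bracketE /=.
have le_wn := wstar_le n q; have le_wq := binsum_wstar n q.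
set w := wstar n q in le_wn le_wq *.
have lt_wn : (w < n)%N.
  rewrite ltn_neqAle le_wn andbT; apply/eqP => w_n.
  by move: le_wq lt_q_full; rewrite w_n -binsum_full; lia.
have lt_q_next : (q.-1 < binsum n w.+1)%N.
  by rewrite ltnNge; apply/negP => /(leq_wstar _ _ _ lt_wn); rewrite ltnn.
have [lt_q_level|le_level_q] := ltnP q (binsum n w.+1).
  have -> : wstar n q.+1 = w by apply: wstar_succ => //; [lia | right].
  by rewrite -bracket_succ // prednK.
have -> : wstar n q.+1 = w.+1.
  apply: wstar_succ => //; have [lt_w1n|] := ltnP w.+1 n; last by left; lia.
  by right; rewrite binsumS; have := bin_gt0 n w.+2; rewrite lt_w1n; lia.
have q_level : q = binsum n w.+1 by lia.
by rewrite q_level -bracket_succ_level -bracket_succ ?prednK //; lia.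
Qed.

Lemma eps_mul_pred q : (1 <= q)%N -> (1 <= n)%N ->
  eps n m q f * (q.-1)%:R = eps_bracket n m q f.
Proof.
case: q => [//|[|q]] _ n_ge1; last by rewrite /eps mulfVK // pnatr_eq0.
rewrite mulr0 eps_bracketE.
have -> : wstar n 1 = 0%N.
  by apply: wstar_succ; rewrite ?binsum0 //; right; rewrite binsumS binsum0 bin1.
by rewrite /bracket big_geq // binsum0 mul0r addr0.
Qed.

End EpsBracket.

Lemma ratio_succ (R : realFieldType) (Q B c e : R) :
  1 <= Q -> 0 < e -> e < 1 -> e <= c -> c <= 1 -> (Q - 1) * c <= B ->
  Q ^+ 2 / (Q * e * (1 + B - Q * e))
    <= (Q + 1) ^+ 2 / ((Q + 1) * e * (1 + (B + c) - (Q + 1) * e)).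
Proof.
move=> Q_ge1 e_gt0 e_lt1 le_ec c_le1 le_B.
have D_gt0 : 0 < 1 + B - Q * e by nra.
have D'_gt0 : 0 < 1 + (B + c) - (Q + 1) * e by nra.
have cancel (P D : R) : P != 0 -> P ^+ 2 / (P * e * D) = P / (e * D).
  by move=> P_neq0; rewrite expr2 -[P * e * D]mulrA invfM mulrA mulfK.
rewrite !cancel ?gt_eqF; [|lra..].
rewrite ler_pdivrMr ?mulr_gt0 // mulrAC ler_pdivlMr ?mulr_gt0 //.
rewrite !mulrA [Q * e]mulrC [(Q + 1) * e]mulrC -!mulrA ler_pM2l //.
lra.
Qed.

Lemma ratio_step (R : realFieldType) (n m : nat) (f : R) (q : nat) :
  (1 <= m)%N -> 0 <= f -> f <= 1 / 2 -> (1 <= q)%N -> (q < 2 ^ n)%N ->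
  q%:R ^+ 2 / v n m f q <= q.+1%:R ^+ 2 / v n m f q.+1.
Proof.
move=> m_ge1 f_ge0 f_le_half q_ge1 lt_q_full.
have n_ge1 : (1 <= n)%N by case: n lt_q_full => //; case: q q_ge1.
have x_ge0 : 0 <= 1 - 2 * f by lra.
have x_le1 : 1 - 2 * f <= 1 by lra.
rewrite /v !eps_mul_pred // eps_bracket_succ // -[q.+1%:R]natr1.
apply: ratio_succ; rewrite ?ler1n ?inv_exp2_gt0 ?weight_le1 ?inv_exp2_le_weight //.
  by rewrite invf_lt1 ?exprn_gt0 // exprn_egt1 -?lt0n // ltr1n.
have -> : q%:R - 1 = q.-1%:R :> R by rewrite -[in LHS](prednK q_ge1) -natr1 addrK.
by rewrite eps_bracketE bracket_ge ?binsum_wstar.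
Qed.

Theorem lemma2 (R : realFieldType) (n m : nat) (f : R) :
  (1 <= m)%N -> (m <= n)%N -> 0 <= f -> f <= 1 / 2 ->
  forall q1 q2 : nat, (1 <= q1)%N -> (q1 <= q2)%N -> (q2 <= 2 ^ n)%N ->
    (q1%:R ^+ 2) / v n m f q1 <= (q2%:R ^+ 2) / v n m f q2.
Proof.
move=> m_ge1 _ f_ge0 f_le_half q1 q2 q1_ge1 le_q12 q2_le_full.
pose D := [pred q : nat | (1 <= q <= 2 ^ n)%N].
apply: (@homo_leq_in _ D (fun q => q%:R ^+ 2 / v n m f q) (fun x y => x <= y)).
- exact: lexx.
- exact: le_trans.
- by move=> i j /andP[i_ge1 _] /andP[_ j_le] k /andP[lt_ik lt_kj]; apply/andP; lia.
- by move=> i /andP[i_ge1 _] /andP[_ lt_i]; exact: ratio_step.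
- by rewrite inE q1_ge1 (leq_trans le_q12).
- by rewrite inE q2_le_full (leq_trans q1_ge1).
- exact: le_q12.
Qed.
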